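(* Let $P=\sum_{i=0}^Nq^iP_i(D)\in\mathbb{C}[q][D]$ with $D=q\frac{d}{dq}$, and let $P_i^{(r)}$ denote the $r$-th formal derivative of the polynomial $P_i$. Let $I=\sum_{0\leq i\leq N,\ j\geq0}a_{ij}h^iq^j$ with $a_{ij}\in\mathbb{C}$, and set $a_{ij}=0$ for $j<0$. Then $I$ is a perturbed solution of $P$ if and only if for every $0\leq s\leq N$ and every $m\in\mathbb{Z}$ $$\sum_{k=0}^s\frac{1}{(s-k)!}\Big(a_{k,m}P^{(s-k)}_N(m)+a_{k,m+1}P^{(s-k)}_{N-1}(m+1)+\cdots+a_{k,m+N}P^{(s-k)}_0(m+N)\Big)=0.$$
   Context: Write $I=\sum_{i=0}^NI^ih^i$ with $I^i=\sum_ja_{ij}q^j$, and put $I_r=\sum_{m=0}^rI^{r-m}\,t^m/m!\in\mathbb{C}[[q]][t]$. Operators act on $\mathbb{C}[[q]][t]$ via $D(f(q)t^m)=qf'(q)t^m+mf(q)t^{m-1}$, with $q$ acting by multiplication. $I$ is a perturbed solution of $P$ if $PI_r=0$ for all $0\leq r\leq N$. *)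

From HB Require Import structures.
From mathcomp Require Import all_boot all_order all_algebra.
From mathcomp Require Import complex.
From mathcomp Require Import reals Rstruct.
Set Implicit Arguments. Unset Strict Implicit. Unset Printing Implicit Defensive.
Import Order.TTheory GRing.Theory Num.Theory.
Local Open Scope ring_scope.

Notation Cplx := (complex Rdefinitions.R).

(* An element of C[[q]][t] is represented by its coefficient array:
   f j m = coefficient of q^j t^m. *)
Definition qtseries := nat -> nat -> Cplx.

(* D (f(q) t^m) = q f'(q) t^m + m f(q) t^(m-1) *)
Definition Dop (f : qtseries) : qtseries :=
  fun j m => j%:R * f j m + m.+1%:R * f j m.+1.

Definition qop (f : qtseries) : qtseries :=
  fun j m => if j is j'.+1 then f j' m else 0.

Definition polyD (p : {poly Cplx}) (f : qtseries) : qtseries :=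
  fun j m => \sum_(k < size p) p`_k * iter k Dop f j m.

Definition Pop (N : nat) (Pc : nat -> {poly Cplx}) (f : qtseries) : qtseries :=
  fun j m => \sum_(i < N.+1) iter i qop (polyD (Pc i) f) j m.

(* I_r = sum_{m=0}^r I^{r-m} t^m / m!, with I^i = sum_j a i j q^j *)
Definition Ir (a : nat -> nat -> Cplx) (r : nat) : qtseries :=
  fun j m => if (m <= r)%N then a (r - m)%N j / (m`!)%:R else 0.

Definition perturbed_solution (N : nat) (Pc : nat -> {poly Cplx})
    (a : nat -> nat -> Cplx) : Prop :=
  forall r : nat, (r <= N)%N -> forall j m : nat, Pop N Pc (Ir a r) j m = 0.

Definition aZ (a : nat -> nat -> Cplx) (i : nat) (j : int) : Cplx :=
  match j with Posz n => a i n | Negz _ => 0 end.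

From mathcomp Require Import all_boot all_order all_algebra.
From mathcomp Require Import complex.
From mathcomp Require Import reals Rstruct.
From mathcomp Require Import ring zify.
Import Order.TTheory GRing.Theory Num.Theory.
Local Open Scope ring_scope.

(* On the coefficient of q^j the operator D acts as j + d/dt, so Taylor's
   formula gives p(D) = sum_i p^(i)(j)/i! (d/dt)^i.  As d/dt maps I_r to
   I_(r-1), the t^m-coefficient of P I_r is 1/m! times the t^0-coefficient of
   P I_(r-m).  Hence I is a perturbed solution iff the t^0-coefficients of
   P I_s vanish for s <= N, and the q^(m+N) t^0-coefficient of P I_s is the
   s-th relation at m, up to the reindexing k -> s - k, l -> N - i.  For
   m + N < 0 the relation holds trivially since all the a_(k, m+l) vanish. *)

Definition Dtop (f : qtseries) : qtseries := fun j m => m.+1%:R * f j m.+1.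

Lemma iter_DtopS f i j m : iter i.+1 Dtop f j m = m.+1%:R * iter i Dtop f j m.+1.
Proof. by []. Qed.

Lemma iter_Dop f k j m :
  iter k Dop f j m =
  \sum_(i < k.+1) 'C(k, i)%:R * j%:R ^+ (k - i) * iter i Dtop f j m.
Proof.
elim: k m => [|k IHk] m; first by rewrite big_ord1 expr0 !mul1r.
rewrite iterS [LHS]/Dop !IHk !mulr_sumr -big_split.
have pascal (i : 'I_k.+1) :
    j%:R * ('C(k, i)%:R * j%:R ^+ (k - i) * iter i Dtop f j m) +
    m.+1%:R * ('C(k, i)%:R * j%:R ^+ (k - i) * iter i Dtop f j m.+1) =
    'C(k, i)%:R * j%:R ^+ (k.+1 - i) * iter i Dtop f j m +
    'C(k, i)%:R * j%:R ^+ (k - i) * iter i.+1 Dtop f j m.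
  have ik : (i <= k)%N := ltn_ord i.
  rewrite iter_DtopS subSn // exprS.
  by move: (iter i Dtop f j m) (iter i Dtop f j m.+1) => x y; ring.
rewrite (eq_bigr _ (fun i _ => pascal i)) big_split /= [RHS]big_ord_recl.
under [X in _ = _ + X]eq_bigr => i _ do
  rewrite /bump /= ?add1n binS natrD subSS !mulrDl.
rewrite big_split /= addrCA addrA; congr (_ + _).
rewrite big_ord_recl [in RHS]big_ord_recr /= (bin_small (ltnSn k)) mulr0n.
rewrite !mul0r addr0 !bin0 addrC.
by congr (_ + _); apply: eq_bigr => i _; rewrite /bump /= add1n subSS.
Qed.

Lemma iter_Dop_wide f n k j m : (k < n)%N ->
  iter k Dop f j m =
  \sum_(i < n) 'C(k, i)%:R * j%:R ^+ (k - i) * iter i Dtop f j m.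
Proof.
move=> kn; rewrite iter_Dop.
rewrite (big_ord_widen n
  (fun i => 'C(k, i)%:R * j%:R ^+ (k - i) * iter i Dtop f j m)) //.
rewrite big_mkcond /=; apply: eq_bigr => i _.
by case: ltnP => // ki; rewrite bin_small // mulr0n !mul0r.
Qed.

Lemma horner_nderivn (R : comNzRingType) (p : {poly R}) i x :
  (p^`N(i)).[x] = \sum_(k < size p) p`_k * ('C(k, i)%:R * x ^+ (k - i)).
Proof.
rewrite -{1}[p]coefK poly_def linear_sum horner_sum; apply: eq_bigr => k _.
by rewrite linearZ /= nderivnXn hornerZ hornerMn hornerXn mulr_natl.
Qed.

Lemma polyD_taylor p f j m :
  polyD p f j m = \sum_(i < size p) (p^`N(i)).[j%:R] * iter i Dtop f j m.
Proof.
rewrite /polyD.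
under eq_bigr => k _ do rewrite (iter_Dop_wide _ _ _ _ _ (ltn_ord k)) mulr_sumr.
rewrite exchange_big /=; apply: eq_bigr => i _.
by rewrite horner_nderivn mulr_suml; apply: eq_bigr => k _; rewrite !mulrA.
Qed.

Lemma iter_Dtop_Ir a r i j m :
  iter i Dtop (Ir a r) j m =
  if (m + i <= r)%N then a (r - i - m)%N j / (m`!)%:R else 0.
Proof.
elim: i m => [|i IHi] m; first by rewrite addn0 subn0.
rewrite iter_DtopS IHi addSn addnS; case: ifP => _; last by rewrite mulr0.
have -> : (r - i - m.+1 = r - i.+1 - m)%N by rewrite -!subnDA addnS addSn.
by rewrite factS natrM invfM mulrCA !mulrA mulfK // pnatr_eq0.
Qed.

Lemma polyD_Ir_shift p a r j m :
  polyD p (Ir a r) j m =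
  if (m <= r)%N then ((m`!)%:R)^-1 * polyD p (Ir a (r - m)) j 0 else 0.
Proof.
rewrite !polyD_taylor; case: leqP => mr.
  rewrite mulr_sumr; apply: eq_bigr => i _.
  rewrite !iter_Dtop_Ir add0n leq_subRL // subn0 subnAC divr1.
  by case: ifP => _; rewrite ?mulr0 //; ring.
apply: big1 => i _; rewrite iter_Dtop_Ir.
by case: ifP => [mir|_]; rewrite ?mulr0 //; move: mir mr; lia.
Qed.

Lemma iter_qop i f j m : iter i qop f j m = if (i <= j)%N then f (j - i)%N m else 0.
Proof. by elim: i j => [|i IHi] [|j] //=; rewrite ?subn0 // /qop IHi. Qed.

Lemma Pop_Ir_shift N Pc a r j m :
  Pop N Pc (Ir a r) j m =
  if (m <= r)%N then ((m`!)%:R)^-1 * Pop N Pc (Ir a (r - m)) j 0 else 0.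
Proof.
rewrite /Pop; under eq_bigr do rewrite iter_qop polyD_Ir_shift.
case: leqP => mr; last by apply: big1 => i _; case: ifP.
rewrite mulr_sumr; apply: eq_bigr => i _; rewrite iter_qop polyD_Ir_shift subn0.
by case: ifP; rewrite ?mulr0 // fact0 invr1 mul1r.
Qed.

Lemma big_ord_shrink {V : nmodType} n K (F : nat -> V) : (n <= K)%N ->
  (forall i, (n <= i < K)%N -> F i = 0) ->
  \sum_(i < K) F i = \sum_(i < n) F i.
Proof.
move=> nK F0; rewrite [RHS](big_ord_widen K F nK) [RHS]big_mkcond /=.
by apply: eq_bigr => i _; case: ltnP => // ni; rewrite F0 // ni ltn_ord.
Qed.

Lemma polyD_Ir0 p a s j :
  polyD p (Ir a s) j 0 = \sum_(k < s.+1) (p^`N(k)).[j%:R] * a (s - k)%N j.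
Proof.
pose F k := (p^`N(k)).[j%:R] * iter k Dtop (Ir a s) j 0.
have F_big k : (size p <= k)%N -> F k = 0.
  by move=> pk; rewrite /F nderivn_poly0 // horner0 mul0r.
have F_low k : (k <= s)%N -> F k = (p^`N(k)).[j%:R] * a (s - k)%N j.
  by move=> ks; rewrite /F iter_Dtop_Ir add0n ks subn0 divr1.
rewrite polyD_taylor -/(\sum_(k < size p) F k).
rewrite -(big_ord_shrink _ _ F (leq_addr s.+1 _)); last first.
  by move=> k /andP[pk _]; apply: F_big.
rewrite (big_ord_shrink _ _ F (leq_addl _ s.+1)); last first.
  by move=> k /andP[sk _]; rewrite /F iter_Dtop_Ir add0n leqNgt sk mulr0.
by apply: eq_bigr => k _; apply: F_low; rewrite -ltnS.
Qed.

Lemma aZ_neg a i (z : int) : z < 0 -> aZ a i z = 0.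
Proof. by case: z. Qed.

Lemma Pop_Ir0 N Pc a s j :
  Pop N Pc (Ir a s) j 0 =
  \sum_(i < N.+1) \sum_(k < s.+1)
     aZ a (s - k) (j%:Z - i%:Z) * ((Pc i)^`N(k)).[(j%:Z - i%:Z)%:~R].
Proof.
rewrite /Pop; apply: eq_bigr => i _; rewrite iter_qop; case: leqP => ij.
  by rewrite polyD_Ir0 (subzn ij); apply: eq_bigr => k _; rewrite mulrC.
by rewrite big1 // => k _; rewrite aZ_neg ?mul0r // subr_lt0 ltz_nat.
Qed.

Definition recurrence_sum N (Pc : nat -> {poly Cplx}) a s (m : int) : Cplx :=
  \sum_(k < s.+1) ((s - k)`!%:R)^-1 *
    \sum_(l < N.+1) aZ a k (m + l%:Z) * ((Pc (N - l)%N)^`(s - k)).[(m + l%:Z)%:~R].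

Lemma recurrence_sumE N Pc a s m :
  recurrence_sum N Pc a s m =
  \sum_(i < N.+1) \sum_(k < s.+1)
     aZ a (s - k) (m + N%:Z - i%:Z) * ((Pc i)^`N(k)).[(m + N%:Z - i%:Z)%:~R].
Proof.
rewrite /recurrence_sum; under eq_bigr => k _ do rewrite mulr_sumr.
rewrite exchange_big (reindex_inj rev_ord_inj); apply: eq_bigr => i _ /=.
have iN : (i <= N)%N by rewrite -ltnS.
rewrite subSS subKn // -addrA -(subzn iN).
rewrite (reindex_inj rev_ord_inj); apply: eq_bigr => k _ /=.
have ks : (k <= s)%N by rewrite -ltnS.
rewrite subSS subKn // nderivn_def hornerMn -[_ *+ k`!]mulr_natr.
by field; rewrite pnatr_eq0 -lt0n fact_gt0.
Qed.

Theorem corollary4p4 (N : nat) (Pc : nat -> {poly Cplx}) (a : nat -> nat -> Cplx) :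
  perturbed_solution N Pc a <->
  (forall s : nat, (s <= N)%N -> forall m : int,
     \sum_(k < s.+1)
        ((s - k)`!%:R)^-1 *
        \sum_(l < N.+1)
           aZ a k (m + l%:Z) * ((Pc (N - l)%N)^`(s - k)).[(m + l%:Z)%:~R]
     = 0).
Proof.
split=> [sol s sN m | rec r rN j m].
  change (recurrence_sum N Pc a s m = 0); rewrite recurrence_sumE.
  case mN: (m + N%:Z) => [j|j].
    by rewrite -Pop_Ir0; apply: sol.
  apply: big1 => i _; apply: big1 => k _; rewrite aZ_neg ?mul0r //.
  by move: mN; lia.
rewrite Pop_Ir_shift; case: leqP => // mr.
have := rec (r - m)%N (leq_trans (leq_subr m r) rN) (j%:Z - N%:Z).
rewrite -/(recurrence_sum _ _ _ _ _) recurrence_sumE subrK -Pop_Ir0 => ->.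
by rewrite mulr0.
Qed.
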